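(* Let $\phi$ be a first order sentence in negation normal form. There exist a strategy $\sigma_0$ of Abelard in the model existence game $\mathrm{MEG}(\phi)$ (an ``enumeration strategy'') and a mapping $\Psi$ such that for every strategy $\tau$ of Eloise in $\mathrm{MEG}(\phi)$, the play of $\mathrm{MEG}(\phi)$ in which Abelard follows $\sigma_0$ and Eloise follows $\tau$ determines a unique structure $M(\tau)$ (whose domain consists of interpretations of the constants $c_n$), and $\Psi(\tau)$ is a strategy of Eloise in the evaluation game $G(M(\tau),\phi)$. If $\tau$ is a winning strategy of Eloise in $\mathrm{MEG}(\phi)$, then $\Psi(\tau)$ is a winning strategy of Eloise in $G(M(\tau),\phi)$.
   Context: An assignment into a set $X$ is a map from a finite set of variables into $X$; $s(a/x)$ denotes the assignment agreeing with $s$ except that it sends $x$ to $a$. A formula is in negation normal form if negation occurs only in front of atomic formulas; the connectives are $\neg,\wedge,\vee,\forall,\exists$. Evaluation game $G(M,\phi)$: players Abelard and Eloise. Positions are pairs $(\psi,s)$ with $\psi$ a subformula of $\phi$ and $s$ an assignment into $M$; initial position $(\phi,\emptyset)$. At $(\psi,s)$: if $\psi$ is a literal, the game ends and Eloise wins iff $s$ satisfies $\psi$ in $M$; if $\psi=\psi_0\wedge\psi_1$, Abelard chooses the next position $(\psi_0,s)$ or $(\psi_1,s)$; if $\psi=\psi_0\vee\psi_1$, Eloise chooses it; if $\psi=\forall x\theta$, Abelard chooses $a\in M$ and the next position is $(\theta,s(a/x))$; if $\psi=\exists x\theta$, Eloise chooses $a\in M$ and the next position is $(\theta,s(a/x))$.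 A strategy is winning if its player wins every play following it. Model existence game $\mathrm{MEG}(\phi)$: let $C=\{c_0,c_1,\ldots\}$ be a countable set of new distinct constant symbols; a $C$-assignment is an assignment into $C$. Positions are finite sets $S$ of pairs $(\psi,s)$ with $\psi$ a subformula of $\phi$ and $s$ a $C$-assignment; the initial position is $\{(\phi,\emptyset)\}$. At each move, given the position $S$, Abelard selects a pair in $S$ and one of the following applies: if $(\psi_0\wedge\psi_1,s)\in S$, Abelard may decide that the next position is $S\cup\{(\psi_0,s)\}$ or $S\cup\{(\psi_1,s)\}$; if $(\psi_0\vee\psi_1,s)\in S$, Abelard may demand that Eloise choose whether the next position is $S\cup\{(\psi_0,s)\}$ or $S\cup\{(\psi_1,s)\}$; if $(\forall x\theta,s)\in S$, Abelard may choose $n\in\mathbb N$ and the next position is $S\cup\{(\theta,s(c_n/x))\}$; if $(\exists x\theta,s)\in S$, Abelard may demand that Eloise choose some $c_n$, and the next position is $S\cup\{(\theta,s(c_n/x))\}$. Abelard wins if at some point the position contains both $(\psi,s)$ and $(\neg\psi,s')$ with $\psi$ atomic and $s(x)=s'(x)$ for all variables $x$ of $\psi$. Otherwise (the game continuing for infinitely many moves) Eloise wins.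
   Formalization: φ has a relational vocabulary without equality, and Abelard wins MEG(φ) once the position contains (ψ,s) and (¬ψ′,s′) with atomic ψ, ψ′ sharing a relation symbol and s, s′ sending their argument tuples to the same constants. The statement above fails without it. *)

From mathcomp Require Import all_boot.
From Stdlib Require List.

Set Implicit Arguments.
Unset Strict Implicit.
Unset Printing Implicit Defensive.

Section Syntax.
Variable Rel : Type.

(* Formulas in negation normal form: negation only in front of atoms. *)
Inductive form : Type :=
  | Atom  of Rel & seq nat
  | NAtom of Rel & seq nat
  | And   of form & form
  | Or    of form & form
  | All   of nat & form
  | Ex    of nat & form.

Fixpoint fv (f : form) : seq nat :=
  match f with
  | Atom _ xs | NAtom _ xs => xs
  | And g h | Or g h => fv g ++ fv h
  | All x g | Ex x g => [seq y <- fv g | y != x]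
  end.

Definition sentence (f : form) : Prop := fv f = [::].

Definition is_lit (f : form) : Prop :=
  match f with Atom _ _ | NAtom _ _ => True | _ => False end.

Definition asgn (D : Type) := nat -> option D.
Definition empty_asgn (D : Type) : asgn D := fun _ => None.
Definition upd (D : Type) (s : asgn D) (x : nat) (a : D) : asgn D :=
  fun y => if y == x then Some a else s y.

End Syntax.

(* Evaluation game G(M, phi); a structure with domain D interprets each
   relation symbol as a predicate on tuples (sequences) of elements.   *)
Section EvalGame.
Variables (Rel : Type) (D : Type) (I : Rel -> seq D -> Prop).

Definition epos := (form Rel * asgn D)%type.

Definition sat_lit (p : epos) : Prop :=
  match p.1 with
  | Atom R xs => exists v, map p.2 xs = map Some v /\ I R v
  | NAtom R xs => exists v, map p.2 xs = map Some v /\ ~ I R v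
  | _ => False
  end.

(* A strategy of Eloise: given the history of positions (ending with the
   current one), choose a disjunct (true = left) or an element of D. *)
Record estratG := EStratG {
  g_or : seq epos -> bool;
  g_ex : seq epos -> D }.

(* legal moves following Eloise's strategy; hist ends with cur *)
Definition emove (sg : estratG) (hist : seq epos) (cur nxt : epos) : Prop :=
  match cur.1 with
  | Atom _ _ | NAtom _ _ => False
  | And f g => nxt = (f, cur.2) \/ nxt = (g, cur.2)
  | Or f g => nxt = ((if g_or sg hist then f else g), cur.2)
  | All x f => exists a, nxt = (f, upd cur.2 x a)
  | Ex x f => nxt = (f, upd cur.2 x (g_ex sg hist))
  end.

Fixpoint follows (sg : estratG) (h : seq epos) (cur : epos) (rest : seq epos)
  : Prop :=
  match rest with
  | [::] => is_lit cur.1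
  | nxt :: r => emove sg (rcons h cur) cur nxt /\ follows sg (rcons h cur) nxt r
  end.

Definition winningG (phi : form Rel) (sg : estratG) : Prop :=
  forall rest, follows sg [::] (phi, empty_asgn D) rest ->
    sat_lit (last (phi, empty_asgn D) rest).

End EvalGame.

(* Model existence game MEG(phi).  The new constant c_n is identified with
   the natural number n, so C-assignments are asgn nat. *)
Section MEG.
Variable Rel : Type.

Definition mpair := (form Rel * asgn nat)%type.

(* Abelard's move: the selected pair, a side for a conjunction
   (true = left), and an index n for a universal quantifier. *)
Definition amove := (mpair * bool * nat)%type.

(* a round: Abelard's move and the pair that is added to the position *)
Definition round := (amove * mpair)%type.

Definition astrat := seq round -> amove.

Record estratM := EStratM {
  m_or : seq round -> amove -> bool;   (* true = left disjunct *)
  m_ex : seq round -> amove -> nat }.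

(* the pair added in response to Abelard's move (a literal selection,
   which is illegal, just re-adds the selected pair) *)
Definition result (tau : estratM) (h : seq round) (am : amove) : mpair :=
  let: (p, b, k) := am in
  match p.1 with
  | Atom _ _ | NAtom _ _ => p
  | And f g => (if b then f else g, p.2)
  | Or f g => (if m_or tau h am then f else g, p.2)
  | All x f => (f, upd p.2 x k)
  | Ex x f => (f, upd p.2 x (m_ex tau h am))
  end.

Fixpoint rounds (sigma : astrat) (tau : estratM) (n : nat) : seq round :=
  match n with
  | 0 => [::]
  | n'.+1 => let h := rounds sigma tau n' in
             let am := sigma h in rcons h (am, result tau h am)
  end.

(* the position (finite set of pairs, as a list) after n moves *)
Definition pos_at (phi : form Rel) sigma tau n : seq mpair :=
  (phi, empty_asgn nat) :: map snd (rounds sigma tau n).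

Definition legal_sel (S : seq mpair) (p : mpair) : Prop :=
  List.In p S /\ ~ is_lit p.1.

Definition legalA (phi : form Rel) (sigma : astrat) (tau : estratM) : Prop :=
  forall n, let S := pos_at phi sigma tau n in
    (exists q, legal_sel S q) -> legal_sel S (sigma (rounds sigma tau n)).1.1.

(* Abelard's winning condition: complementary literals with the same
   relation symbol and the same tuple of constants. *)
Definition clash (S : seq mpair) : Prop :=
  exists R xs ys s s', List.In (Atom R xs, s) S /\ List.In (NAtom R ys, s') S
    /\ map s xs = map s' ys.

Definition winningM (phi : form Rel) (tau : estratM) : Prop :=
  forall sigma : astrat, legalA phi sigma tau ->
    forall n, ~ clash (pos_at phi sigma tau n).

Definition Mtau (phi : form Rel) (sigma0 : astrat) (tau : estratM)
  : Rel -> seq nat -> Prop :=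
  fun R v => exists n xs s, List.In (Atom R xs, s) (pos_at phi sigma0 tau n)
                            /\ map s xs = map Some v.

End MEG.

(* Abelard plays an enumeration strategy: the round number is decoded as a
   tuple (i, b, k, t), and Abelard selects the i-th pair of the current
   position with side b and constant c_k.  Since t ranges over infinitely
   many values, every non-literal pair that ever enters the play is later
   selected with every choice of (b, k).  Eloise's strategy Psi(tau) in the
   evaluation game copies, at a disjunction or an existential, the answer
   tau gave when Abelard selected that pair.  Hence every position of a play
   of G(M(tau), phi) following Psi(tau) occurs in the play of MEG(phi), with
   an assignment defined on the free variables.  A final positive literal
   then holds in M(tau) by definition of M(tau), and a final negative literal
   holds because otherwise the play of MEG(phi) would contain a clash. *)
From mathcomp Require Import all_boot.
From Stdlib Require Import ClassicalEpsilon.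
From Stdlib Require List.

Set Implicit Arguments.
Unset Strict Implicit.
Unset Printing Implicit Defensive.

Lemma In_nth (T : Type) (x0 : T) (s : seq T) x :
  List.In x s -> exists2 i, i < size s & nth x0 s i = x.
Proof.
elim: s => [|y s IHs] //= [->|/IHs [i lt_is <-]]; first by exists 0.
by exists i.+1.
Qed.

Lemma mem_nth_In (T : Type) (x0 : T) (s : seq T) i :
  i < size s -> List.In (nth x0 s i) s.
Proof. by elim: s i => [|y s IHs] [|i] //= lt_is; [left | right; apply: IHs]. Qed.

Lemma In_head_filter (T : Type) (x0 : T) (a : pred T) (s : seq T) x :
  List.In x s -> a x ->
  List.In (head x0 (filter a s)) s /\ a (head x0 (filter a s)).
Proof.
elim: s => [|y s IHs] //= [->|/IHs in_s] ax; first by rewrite ax; auto.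
by case: ifP => [ay | _ /=]; [auto | case: (in_s ax); auto].
Qed.

Lemma injective_unbounded (f : nat -> nat) :
  injective f -> forall N, exists t, N <= f t.
Proof.
move=> inj_f N; apply: Classical_Prop.NNPP => no_t.
have f_lt t : f t < N by rewrite ltnNge; apply/negP => ?; apply: no_t; exists t.
have uniq_f : uniq (map f (iota 0 N.+1)) by rewrite map_inj_uniq ?iota_uniq.
have sub_f : {subset map f (iota 0 N.+1) <= iota 0 N}.
  by move=> _ /mapP [t _ ->]; rewrite mem_iota f_lt.
by have := uniq_leq_size uniq_f sub_f; rewrite size_map !size_iota ltnn.
Qed.

Definition is_litb (Rel : Type) (f : form Rel) : bool :=
  if f is Atom _ _ then true else if f is NAtom _ _ then true else false.

Lemma is_litP (Rel : Type) (f : form Rel) : reflect (is_lit f) (is_litb f).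
Proof. by case: f => *; constructor. Qed.

Definition defines_fv (Rel D : Type) (p : form Rel * asgn D) : Prop :=
  forall y, y \in fv p.1 -> p.2 y <> None.

Lemma emove_defines_fv (Rel D : Type) (sg : estratG Rel D) h cur nxt :
  defines_fv cur -> emove sg h cur nxt -> defines_fv nxt.
Proof.
case: cur => [[R xs|R xs|f g|f g|x f|x f] s] //= def_s.
- by case=> -> y fv_y; apply: def_s; rewrite mem_cat fv_y ?orbT.
- by move=> ->; case: ifP => _ y fv_y; apply: def_s; rewrite mem_cat fv_y ?orbT.
- case=> a -> y /=; rewrite /upd; case: eqP => // /eqP y_x fv_y.
  by apply: def_s; rewrite mem_filter y_x.
- move=> -> y /=; rewrite /upd; case: eqP => // /eqP y_x fv_y.
  by apply: def_s; rewrite mem_filter y_x.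
Qed.

Lemma defines_fv_map (D : Type) (s : asgn D) xs :
  (forall y, y \in xs -> s y <> None) -> exists v, map s xs = map Some v.
Proof.
elim: xs => [|x xs IHxs] def_s; first by exists [::].
have [|v s_xs] := IHxs; first by move=> y xs_y; apply: def_s; rewrite inE xs_y orbT.
case sx: (s x) => [a|]; first by exists (a :: v); rewrite /= sx s_xs.
by case: (def_s x); rewrite ?inE ?eqxx.
Qed.

Section Play.
Variables (Rel : Type) (phi : form Rel) (sigma : astrat Rel) (tau : estratM Rel).

Lemma size_rounds n : size (rounds sigma tau n) = n.
Proof. by elim: n => //= n IHn; rewrite size_rcons IHn. Qed.

Lemma rounds_prefix n m :
  n <= m -> exists r, rounds sigma tau m = rounds sigma tau n ++ r.
Proof.
move/subnK <-; elim: (m - n) => [|d [r IHd]]; first by exists [::]; rewrite cats0.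
set h := rounds sigma tau (d + n).
by exists (rcons r (sigma h, result tau h (sigma h))); rewrite addSn /= -/h -rcons_cat -IHd.
Qed.

Lemma pos_at_prefix n m :
  n <= m -> exists r, pos_at phi sigma tau m = pos_at phi sigma tau n ++ r.
Proof.
by move/rounds_prefix => [r rounds_m]; exists (map snd r); rewrite /pos_at rounds_m map_cat.
Qed.

Lemma In_pos_at_mono n m p :
  List.In p (pos_at phi sigma tau n) -> n <= m ->
  List.In p (pos_at phi sigma tau m).
Proof.
by move=> in_n /pos_at_prefix [r ->]; exact: List.in_or_app (or_introl in_n).
Qed.

Lemma In_result_pos_at n (h := rounds sigma tau n) :
  List.In (result tau h (sigma h)) (pos_at phi sigma tau n.+1).
Proof.
rewrite /pos_at /= map_rcons -cats1; right.
by apply: List.in_or_app; right; left.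
Qed.

End Play.

Section Enumeration.
Variables (Rel : Type) (phi : form Rel).

Local Notation root := (phi, empty_asgn nat).

Definition position (h : seq (round Rel)) : seq (mpair Rel) :=
  root :: map snd h.

Definition first_open (S : seq (mpair Rel)) : amove Rel :=
  (head root [seq p <- S | ~~ is_litb p.1], true, 0).

(* The fallback keeps every move legal when the decoded index is useless. *)
Definition enum_strategy : astrat Rel := fun h =>
  let S := position h in
  if @unpickle (nat * bool * nat * nat)%type (size h) is Some (i, b, k, _) then
    if (i < size S) && ~~ is_litb (nth root S i).1 then (nth root S i, b, k)
    else first_open S
  else first_open S.

Lemma enum_strategy_decode h i b k (t : nat) (S := position h) :
  @unpickle (nat * bool * nat * nat)%type (size h) = Some (i, b, k, t) ->
  i < size S -> ~~ is_litb (nth root S i).1 ->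
  enum_strategy h = (nth root S i, b, k).
Proof. by rewrite /enum_strategy => -> lt_iS open_i; rewrite -/S lt_iS open_i. Qed.

Lemma enum_strategy_legal tau : legalA phi enum_strategy tau.
Proof.
move=> n S [q [in_q /is_litP open_q]].
have first_open_legal : legal_sel S (first_open S).1.1.
  have [] := In_head_filter root (a := fun p : mpair Rel => ~~ is_litb p.1) in_q open_q.
  by split=> //; apply/is_litP.
rewrite /enum_strategy; case: unpickle => [[[[i b] k] t]|] //.
case: ifP => // /andP [lt_iS open_i]; split; first exact: mem_nth_In.
exact/is_litP.
Qed.

Variable tau : estratM Rel.

Local Notation rounds0 := (rounds enum_strategy tau).
Local Notation pos0 := (pos_at phi enum_strategy tau).

Definition reached (p : mpair Rel) : Prop := exists n, List.In p (pos0 n).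

Lemma enum_strategy_fair (p : mpair Rel) b k :
  reached p -> ~~ is_litb p.1 -> exists n, enum_strategy (rounds0 n) = (p, b, k).
Proof.
move=> [n0 in_p] open_p; have [i lt_i nth_i] := In_nth root in_p.
have inj_code : injective (fun t : nat => pickle (i, b, k, t)).
  by move=> t1 t2 /(pcan_inj (@pickleK (nat * bool * nat * nat)%type)) [].
have [t le_n0] := injective_unbounded inj_code n0.
exists (pickle (i, b, k, t)); set n := pickle _ in le_n0 *.
have [r pos_n] : exists r, position (rounds0 n) = pos0 n0 ++ r := pos_at_prefix _ _ _ le_n0.
have lt_in : i < size (position (rounds0 n)) by rewrite pos_n size_cat ltn_addr.
have nth_in : nth root (position (rounds0 n)) i = p by rewrite pos_n nth_cat lt_i.
have code_n : unpickle (size (rounds0 n)) = Some (i, b, k, t).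
  by rewrite size_rounds pickleK.
by rewrite (enum_strategy_decode code_n lt_in) nth_in.
Qed.

Lemma reached_result n (h := rounds0 n) :
  reached (result tau h (enum_strategy h)).
Proof. by exists n.+1; apply: In_result_pos_at. Qed.

Lemma reached_selected_result (p : mpair Rel) b k :
  reached p -> ~~ is_litb p.1 -> exists n, reached (result tau (rounds0 n) (p, b, k)).
Proof.
move=> reached_p open_p; have [n sel_n] := enum_strategy_fair b k reached_p open_p.
by exists n; rewrite -sel_n; apply: reached_result.
Qed.

(* The side and the constant of the selection are irrelevant at a disjunction
   or an existential, so any fixed choice (true, c_0) will do. *)
Definition selection_round (p : mpair Rel) : nat :=
  epsilon (inhabits 0) (fun n => enum_strategy (rounds0 n) = (p, true, 0)).

Lemma selection_roundP (p : mpair Rel) :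
  reached p -> ~~ is_litb p.1 ->
  enum_strategy (rounds0 (selection_round p)) = (p, true, 0).
Proof.
move=> reached_p open_p.
exact: (epsilon_spec _ (fun n => enum_strategy (rounds0 n) = (p, true, 0))
                    (enum_strategy_fair true 0 reached_p open_p)).
Qed.

Definition copy_strategy : estratG Rel nat :=
  let answer_round hist := rounds0 (selection_round (last root hist)) in
  EStratG (fun hist => m_or tau (answer_round hist) (last root hist, true, 0))
          (fun hist => m_ex tau (answer_round hist) (last root hist, true, 0)).

Lemma copy_strategy_reached h cur nxt :
  reached cur -> emove copy_strategy (rcons h cur) cur nxt -> reached nxt.
Proof.
case: cur => f s reached_cur.
have selected b k := reached_selected_result b k reached_cur.
have copy_answer := selection_roundP reached_cur.
have answer_reached := reached_result (selection_round (f, s)).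
case: f reached_cur selected copy_answer answer_reached => //= [f g|f g|x f|x f] _.
- by move=> selected _ _ [] ->; [case: (selected true 0) | case: (selected false 0)].
- by move=> _ copy_answer + ->; rewrite /= last_rcons (copy_answer isT).
- by move=> selected _ _ [a ->]; case: (selected true a).
- by move=> _ copy_answer + ->; rewrite /= last_rcons (copy_answer isT).
Qed.

Lemma copy_strategy_follows h cur rest :
  reached cur -> defines_fv cur -> follows copy_strategy h cur rest ->
  [/\ reached (last cur rest), defines_fv (last cur rest) & is_lit (last cur rest).1].
Proof.
elim: rest h cur => [|nxt rest IHrest] h cur reached_cur def_cur //= [step_nxt follow].
apply: IHrest follow; first exact: copy_strategy_reached step_nxt.
exact: emove_defines_fv step_nxt.
Qed.

Lemma sat_lit_reached (p : mpair Rel) :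
  winningM phi tau -> reached p -> defines_fv p -> is_lit p.1 ->
  sat_lit (Mtau phi enum_strategy tau) p.
Proof.
case: p => -[] //= R xs s win [n in_n] /defines_fv_map [v s_xs] _;
  rewrite /sat_lit /=; exists v; split=> //.
- by exists n, xs, s.
- move=> [n' [ys [s' [in_n' s'_ys]]]].
  apply: (win _ (@enum_strategy_legal tau) (maxn n n')).
  exists R, ys, xs, s', s; split; last split; last by rewrite s'_ys s_xs.
  + by apply: In_pos_at_mono in_n' _; rewrite leq_maxr.
  + by apply: In_pos_at_mono in_n _; rewrite leq_maxl.
Qed.

End Enumeration.

Theorem theorem3 (Rel : Type) (phi : form Rel) (Hphi : sentence phi) :
  exists (sigma0 : astrat Rel) (Psi : estratM Rel -> estratG Rel nat),
    (forall tau : estratM Rel, legalA phi sigma0 tau) /\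
    (forall tau : estratM Rel, winningM phi tau ->
       winningG (Mtau phi sigma0 tau) phi (Psi tau)).
Proof.
exists (enum_strategy phi), (copy_strategy phi); split; first exact: enum_strategy_legal.
move=> tau win rest follow.
have reached_root : reached phi tau (phi, empty_asgn nat) by exists 0; left.
have def_root : defines_fv (phi, empty_asgn nat) by move=> y; rewrite /= Hphi.
have [reached_last def_last lit_last] :=
  copy_strategy_follows reached_root def_root follow.
exact: sat_lit_reached.
Qed.
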